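(* Let $D\subseteq U$ be compact with diameter $\operatorname{diam}(D)=\max_{d,d'\in D}\rho(d,d')$, let $\epsilon\ge0$, $0\le\delta\le1$, and let $\{X_d:\Omega\to U\mid d\in D\}$ be a family of measurable maps such that $$\mathbb{P}(X_d\in A)\le e^\epsilon\,\mathbb{P}(X_{d'}\in A)+\delta$$ for all $d,d'\in D$ and all $A\in\mathcal{A}_U$. Then $$\mathcal{E}:=\sup_{d\in D}\mathbb{E}[\rho(X_d,d)]\ \ge\ (1-\delta)\,\frac{\operatorname{diam}(D)}{2(1+e^\epsilon)}.$$
   Context: $(U,\rho)$ is a metric space with Borel $\sigma$-algebra $\mathcal{A}_U$, and $(\Omega,\mathcal{F},\mathbb{P})$ is a probability space. $\rho(X_d,d)$ is a nonnegative random variable; its expectation may be $+\infty$. *)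

From HB Require Import structures.
From mathcomp Require Import all_boot all_order all_algebra.
From mathcomp Require Import all_classical all_reals all_analysis.
Set Implicit Arguments. Unset Strict Implicit. Unset Printing Implicit Defensive.
Import Order.TTheory GRing.Theory Num.Theory.
Local Open Scope classical_set_scope.
Local Open Scope ring_scope.

Definition is_metric (R : realType) (U : Type) (rho : U -> U -> R) : Prop :=
  (forall x y, 0 <= rho x y) /\
  (forall x y, rho x y = 0 <-> x = y) /\
  (forall x y, rho x y = rho y x) /\
  (forall x y z, rho x z <= rho x y + rho y z).

Definition rho_ball (R : realType) (U : Type) (rho : U -> U -> R) (x : U) (r : R)
  : set U := [set y | rho x y < r].

Definition rho_open (R : realType) (U : Type) (rho : U -> U -> R) (A : set U) : Prop :=
  forall x, A x -> exists2 r : R, 0 < r & rho_ball rho x r `<=` A.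

Definition rho_compact (R : realType) (U : Type) (rho : U -> U -> R) (D : set U) : Prop :=
  forall (I : Type) (F : I -> set U),
    (forall i, rho_open rho (F i)) -> D `<=` \bigcup_i F i ->
    exists J : set I, finite_set J /\ D `<=` \bigcup_(i in J) F i.

(* diameter of D: sup_{d,d' in D} rho d d' (a max when D is compact nonempty) *)
Definition rho_diam (R : realType) (U : Type) (rho : U -> U -> R) (D : set U) : \bar R :=
  ereal_sup [set (rho d d')%:E | d in D & d' in D].

From HB Require Import structures.
From mathcomp Require Import all_boot all_order all_algebra.
From mathcomp Require Import all_classical all_reals all_analysis.
From mathcomp Require Import lra measurable_realfun.
Set Implicit Arguments. Unset Strict Implicit. Unset Printing Implicit Defensive.
Import Order.TTheory GRing.Theory Num.Theory.
Local Open Scope classical_set_scope.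
Local Open Scope ring_scope.

(* Let E bound the expected errors, take d, d' in D and let B be the open ball of
   radius r = rho(d, d')/2 around d.  By Markov's inequality X_d leaves B, and X_d'
   enters B, each with probability at most E / r.  Privacy applied to B gives
     1 - E / r <= P(X_d in B) <= e^eps P(X_d' in B) + delta <= e^eps E / r + delta,
   i.e. (1 - delta) rho(d, d') <= 2 (1 + e^eps) E; now take the sup over d, d'. *)

Lemma two_point_testing (R : realFieldType) (e delta r p q E : R) :
  0 <= r -> 0 <= e -> r * (1 - p) <= E -> r * q <= E -> p <= e * q + delta ->
  (1 - delta) * r <= (1 + e) * E.
Proof.
move=> r0 e0 hp hq hpq.
have : r * (1 - delta) <= r * (1 - p) + e * (r * q).
  by rewrite mulrCA -mulrDr ler_wpM2l //; lra.
have : e * (r * q) <= e * E by rewrite ler_wpM2l.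
lra.
Qed.

Lemma le_integral_superlevel (R : realType) (d : measure_display) (T : measurableType d)
  (mu : {measure set T -> \bar R}) (f : T -> R) (A : set T) (r : R) :
  0 < r -> measurable_fun setT f -> (forall x, 0 <= f x) -> measurable A ->
  A `<=` [set x | r <= f x] -> (r%:E * mu A <= \int[mu]_x (f x)%:E)%E.
Proof.
move=> r0 mf f0 mA Af.
have mfE : measurable_fun setT (EFin \o f) by exact: measurableT_comp.
have := le_integral_abse mu measurableT mfE r0.
rewrite setTI (eq_integral (fun x => (f x)%:E)); last first.
  by move=> x _ /=; rewrite ger0_norm.
move=> h; apply: le_trans h; rewrite lee_pmul2l ?lte_fin //; apply: le_measure; rewrite ?inE //.
- rewrite -(setTI [set _ | _]); apply: emeasurable_fun_c_infty => //.
  exact: measurableT_comp.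
- by move=> x /Af /= rf; rewrite ger0_norm.
Qed.

Section private_two_points.
Variables (R : realType) (dU : measure_display) (U : measurableType dU) (rho : U -> U -> R).
Hypotheses (rho_metric : is_metric rho) (borel_U : @measurable dU U = <<s rho_open rho >>).

Lemma rho_open_ball (c : U) (r : R) : rho_open rho [set y | rho y c < r].
Proof.
have [_ [_ [rhoC rho_tri]]] := rho_metric.
move=> x /= hx; exists (r - rho x c); first by rewrite subr_gt0.
by move=> y; rewrite /rho_ball /= => hy; have := rho_tri y x c; rewrite (rhoC y x); lra.
Qed.

Lemma measurable_rho_ball (c : U) (r : R) : measurable [set y | rho y c < r].
Proof. by rewrite borel_U; apply: sub_sigma_algebra; exact: rho_open_ball. Qed.

Lemma measurable_rho (c : U) : measurable_fun setT (rho ^~ c).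
Proof.
apply: (measurability _ (RGenInftyO.measurableE R)) => //.
move=> _ [_ [x ->] <-]; rewrite setTI.
have -> : rho ^~ c @^-1` `]-oo, x[ = [set y | rho y c < x].
  by apply/seteqP; split => y /=; rewrite in_itv.
exact: measurable_rho_ball.
Qed.

Variables (dO : measure_display) (Omega : measurableType dO) (P : probability Omega R).

Lemma private_two_point_bound (X X' : Omega -> U) (c c' : U) (e delta E : R) :
  measurable_fun setT X -> measurable_fun setT X' -> 0 <= e ->
  (forall A, measurable A -> P (X @^-1` A) <= e%:E * P (X' @^-1` A) + delta%:E)%E ->
  (\int[P]_w (rho (X w) c)%:E <= E%:E)%E -> (\int[P]_w (rho (X' w) c')%:E <= E%:E)%E ->
  (1 - delta) * rho c c' <= 2 * (1 + e) * E.
Proof.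
move=> mX mX' e0 hpriv hE hE'.
have [rho0 [_ [rhoC rho_tri]]] := rho_metric.
have E0 : 0 <= E.
  by rewrite -lee_fin; apply: le_trans hE; apply: integral_ge0 => w _; rewrite lee_fin.
have [cc'0|cc'_gt0] := leP (rho c c') 0.
  have -> : rho c c' = 0 by apply/eqP; rewrite eq_le cc'0 rho0.
  by rewrite mulr0 !mulr_ge0 //; lra.
set r := rho c c' / 2; have r0 : 0 < r by rewrite divr_gt0.
set B := [set y | rho y c < r].
have measurable_preimage (Y : Omega -> U) A :
    measurable_fun setT Y -> measurable A -> measurable (Y @^-1` A).
  by move=> mY mA; rewrite -[Y @^-1` _]setTI; apply: mY.
have mXB := measurable_preimage _ _ mX (measurable_rho_ball c r).
have mX'B := measurable_preimage _ _ mX' (measurable_rho_ball c r).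
have leave : (r%:E * (1 - P (X @^-1` B)) <= E%:E)%E.
  rewrite -probability_setC // preimage_setC; apply: le_trans hE.
  apply: le_integral_superlevel => //; first exact: measurableT_comp (measurable_rho c) mX.
  - by apply: measurable_preimage => //; apply: measurableC; exact: measurable_rho_ball.
  - by move=> w /= /negP; rewrite -leNgt.
have enter : (r%:E * P (X' @^-1` B) <= E%:E)%E.
  apply: le_trans hE'.
  apply: le_integral_superlevel => //; first exact: measurableT_comp (measurable_rho c') mX'.
  move=> w /= hw; have := rho_tri c (X' w) c'; rewrite (rhoC c (X' w)) /r.
  by move: hw; rewrite /B /r /= => hw; lra.
have := hpriv B (measurable_rho_ball c r).
move: leave enter.
rewrite -(fineK (fin_num_measure P _ mXB)) -(fineK (fin_num_measure P _ mX'B)).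
rewrite -EFinB -!EFinM -EFinD !lee_fin => leave enter priv.
have := two_point_testing (ltW r0) e0 leave enter priv.
by rewrite /r; lra.
Qed.

End private_two_points.

Theorem mainTheorem11 (R : realType)
  (dU : measure_display) (U : measurableType dU) (rho : U -> U -> R)
  (dO : measure_display) (Omega : measurableType dO) (P : probability Omega R)
  (D : set U) (X : U -> Omega -> U) (eps delta : R) :
  is_metric rho ->
  (@measurable dU U = <<s rho_open rho >>) ->
  rho_compact rho D -> D !=set0 ->
  0 <= eps -> 0 <= delta -> delta <= 1 ->
  (forall d, D d -> measurable_fun setT (X d)) ->
  (forall d d', D d -> D d' -> forall A : set U, measurable A ->
     P (X d @^-1` A) <= (expR eps)%:E * P (X d' @^-1` A) + delta%:E)%E ->
  (((1 - delta) / (2 * (1 + expR eps)))%:E * rho_diam rho D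
     <= ereal_sup [set (\int[P]_w (rho (X d w) d)%:E)%E | d in D])%E.
Proof.
move=> rho_metric borel_U _ [d0 Dd0] eps0 delta0 delta1 mX hpriv.
set E := ereal_sup _.
have le_E d : D d -> (\int[P]_w (rho (X d w) d)%:E <= E)%E.
  by move=> Dd; apply: ereal_sup_ubound; exists d.
clearbody E.
have den_gt0 : 0 < 2 * (1 + expR eps) by rewrite mulr_gt0 ?ltr_wpDr ?expR_gt0.
rewrite /rho_diam -ereal_supZl; first last.
- by rewrite divr_ge0 ?subr_ge0 // ltW.
- by apply/set0P; exists (rho d0 d0)%:E, d0 => //; exists d0.
apply: ge_ereal_sup => _ [_ [d Dd [d' Dd' <-]] <-].
case: E le_E => [e0| |] le_E; last 2 first.
- exact: leey.
- suff : (0 <= -oo :> \bar R)%E by [].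
  apply: le_trans (le_E d0 Dd0); apply: integral_ge0 => w _.
  by rewrite lee_fin; case: rho_metric.
rewrite -EFinM lee_fin mulrAC ler_pdivrMr // [e0 * _]mulrC.
exact: (private_two_point_bound rho_metric borel_U (mX d Dd) (mX d' Dd') (expR_ge0 eps)
  (hpriv d d' Dd Dd') (le_E d Dd) (le_E d' Dd')).
Qed.
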